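(* Let $T^2=\mathbb{R}^2/\mathbb{Z}^2$, $\alpha\in\mathbb{R}$, and $H:T^2\times\mathbb{R}\to T^2$ the flow $H(x,y,t)=(x+t,y+\alpha t)$. Let $\Delta$ be the partition of $T^2$ into orbits of $H$, $Y$ the space of orbits with the quotient topology, and $p:T^2\to Y$ the projection. Then $p$ has property (CONT), and $p$ has property (COMP) if and only if $\alpha$ is rational.
   Context: A $\Delta$-map is a continuous $h:T^2\to T^2$ mapping each element of $\Delta$ into some element of $\Delta$; $\mathrm{End}(T^2,\Delta)$ is the monoid of $\Delta$-maps, $\mathrm{End}(Y)=C(Y,Y)$, and $\psi(h)$ is the unique map with $p\circ h=\psi(h)\circ p$. Property (COMP): for every compact $L\subset Y$ there is a compact $K\subset T^2$ with $p(K)=L$. Property (CONT): $\psi:\mathrm{End}(T^2,\Delta)\to\mathrm{End}(Y)$ is continuous with respect to compact open topologies. *)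

From HB Require Import structures.
From mathcomp Require Import all_boot all_order all_algebra.
From mathcomp Require Import all_classical all_reals all_analysis.
From mathcomp Require Import generic_quotient.
Unset Printing Implicit Defensive.
Import Order.TTheory GRing.Theory Num.Theory numFieldNormedType.Exports.
Local Open Scope classical_set_scope.
Local Open Scope ring_scope.
Local Open Scope quotient_scope.

Section Defs.
Variable R : realType.

Definition zz_rel (u v : R * R) : bool :=
  (u.1 - v.1 \is a Num.int) && (u.2 - v.2 \is a Num.int).

Lemma zz_refl : reflexive zz_rel.
Proof. by move=> u; rewrite /zz_rel !subrr rpred0. Qed.

Lemma zz_sym : symmetric zz_rel.
Proof.
by move=> u v; rewrite /zz_rel -(opprB u.1) -(opprB u.2) !rpredN.
Qed.

Lemma zz_trans : transitive zz_rel.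
Proof.
move=> v u w /andP[h1 h2] /andP[h3 h4]; apply/andP; split.
- by rewrite -(subrKA v.1); apply: rpredD.
- by rewrite -(subrKA v.2); apply: rpredD.
Qed.

Definition zz_equiv : equiv_rel (R * R) := EquivRel zz_rel zz_refl zz_sym zz_trans.

Definition torus := @quotient_topology (R * R)%type {eq_quot zz_equiv}.

Definition flow (alpha : R) (z : torus) (t : R) : torus :=
  \pi_torus (((repr z).1 + t, (repr z).2 + alpha * t) : R * R).

Definition orbit (alpha : R) (z : torus) : set torus := range (flow alpha z).

Definition orb_rel (alpha : R) (z w : torus) : bool :=
  `[< orbit alpha z = orbit alpha w >].

Lemma orb_refl alpha : reflexive (orb_rel alpha).
Proof. by move=> z; apply/asboolP. Qed.

Lemma orb_sym alpha : symmetric (orb_rel alpha).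
Proof.
move=> z w; apply/asboolP/asboolP => ->; done.
Qed.

Lemma orb_trans alpha : transitive (orb_rel alpha).
Proof. by move=> v u w /asboolP h1 /asboolP h2; apply/asboolP; rewrite h1 h2. Qed.

Definition orb_equiv alpha : equiv_rel torus :=
  EquivRel (orb_rel alpha) (@orb_refl alpha) (@orb_sym alpha) (@orb_trans alpha).

Definition orbit_space (alpha : R) : topologicalType :=
  quotient_topology {eq_quot orb_equiv alpha}.

Definition proj (alpha : R) : torus -> orbit_space alpha :=
  fun z => \pi_(orbit_space alpha) z.

Definition Delta_map (alpha : R) (h : torus -> torus) : Prop :=
  continuous h /\
  forall z : torus, exists w : torus, h @` orbit alpha z `<=` orbit alpha w.

Definition End_Delta (alpha : R) : set {compact-open, torus -> torus} :=
  [set h | Delta_map alpha h].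

(* psi(h): the map with p o h = psi(h) o p (for a Delta-map h). *)
Definition psi (alpha : R) (h : {compact-open, torus -> torus})
  : {compact-open, orbit_space alpha -> orbit_space alpha} :=
  fun y => proj alpha (h (repr y)).

Definition prop_CONT (alpha : R) : Prop :=
  {within End_Delta alpha, continuous (psi alpha)}.

Definition prop_COMP (alpha : R) : Prop :=
  forall L : set (orbit_space alpha), compact L ->
    exists K : set torus, compact K /\ proj alpha @` K = L.

End Defs.

From Pilot Require Import Defs.
From HB Require Import structures.
From mathcomp Require Import all_boot all_order all_algebra.
From mathcomp Require Import all_classical all_reals all_analysis.
From mathcomp Require Import generic_quotient.
From mathcomp.algebra_tactics Require Import ring lra.
Set Implicit Arguments. Unset Strict Implicit.
Unset Printing Implicit Defensive.
Import Order.TTheory GRing.Theory Num.Theory numFieldNormedType.Exports.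
Local Open Scope classical_set_scope.
Local Open Scope ring_scope.
Local Open Scope quotient_scope.

(* Write [u] for the image of u in T^2 = R^2/Z^2.  The points [u], [v] lie on
   the same orbit of H iff u + t (1, alpha) = v mod Z^2 for some real t
   (orbit_pi_eq); the proof splits on the nature of alpha.

   - alpha = p/b rational.  phi (x, y) = b y - p x is, modulo Z, a complete
     invariant of orbits, so u |-> cos (2 pi (phi u - c)) separates the points
     of Y and Y is Hausdorff.  Preimages of compact sets of Y are then closed,
     hence compact, in the compact torus: this gives (COMP) at once, and
     (CONT) since the subbasic open set {g | g(K) c O} around psi(h) pulls
     back to the subbasic open set {g | g(p^-1 K) c p^-1 O} around h.
   - alpha irrational.  The group Z alpha + Z is dense in R, so every orbit
     is dense and Y is indiscrete; (CONT) becomes trivial.  L = Y \ {p[0]} is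
     compact; if a compact K had p(K) = L, the closed sets of intercepts
     y - alpha x of the points (x, y) in [-n, n]^2 over K would miss the
     countable dense set Z alpha + Z yet cover its complement, which Baire's
     theorem forbids. *)

Lemma sep_hausdorff (R : realType) (X : topologicalType) :
  (forall p q : X, p != q -> exists f : X -> R, continuous f /\ f p != f q) ->
  hausdorff_space X.
Proof.
move=> sep p q cl; apply/eqP; apply: contraT => pq.
have [f [cf fpq]] := sep _ _ pq.
suff : f p = f q by move/eqP; rewrite (negbTE fpq).
apply: Rhausdorff => A B nA nB.
have [x [Ax Bx]] := cl _ _ (cf p A nA) (cf q B nB).
by exists (f x).
Qed.

Lemma indiscrete_compact (X : topologicalType) :
  (forall V : set X, open V -> V = set0 \/ V = setT) -> forall A : set X, compact A.
Proof.
move=> indiscrete A F PF FA.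
have [x Ax] : A !=set0 by exact: (filter_ex FA).
exists x; split => // U1 U2 FU1; rewrite nbhsE => -[W [oW Wx] WU2].
case: (indiscrete W oW) => W_eq; first by rewrite W_eq in Wx.
have FU12 : F (U1 `&` U2).
  by apply: filterS FU1 => z U1z; split => //; apply: WU2; rewrite W_eq.
exact: filter_ex FU12.
Qed.

(* Baire: closed sets missing a countable dense set of reals cannot cover
   its complement. *)
Lemma baire_escape (R : realType) (A : set R) (enum : nat -> R)
    (F : nat -> set R) :
  dense A -> A `<=` range enum -> (forall n, closed (F n)) ->
  (forall n, F n `&` A = set0) -> exists c, ~ A c /\ forall n, ~ F n c.
Proof.
move=> dA A_enum F_closed FA.
pose D n := ~` [set enum n] `&` ~` F n.
have D_open_dense n : open (D n) /\ dense (D n).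
  have o1 : open (~` [set enum n]).
    apply: closed_openC; apply: compact_closed.
      exact: Rhausdorff.
    exact: compact_set1.
  have oF : open (~` F n) := closed_openC (F_closed n).
  split; first exact: openI.
  apply: denseI o1 (@dense_set1C R (enum n)) _.
  move=> O O0 oO; have [x [Ox Ax]] := dA O O0 oO.
  exists x; split => // Fx.
  by have : (F n `&` A) x by []; rewrite FA.
have [c [_ Dc]] := Baire D_open_dense (ex_intro _ 0 I : [set: R] !=set0) openT.
exists c; split => [/A_enum [n _ nc]|n]; last by case: (Dc n I).
by case: (Dc n I) => /(_ (esym nc)).
Qed.

Lemma open_squareP (R : realType) (W : set (R * R)) w : open W -> W w ->
  exists2 e, 0 < e &
    forall z : R * R, `|z.1 - w.1| < e -> `|z.2 - w.2| < e -> W z.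
Proof.
move=> oW Ww; have : nbhs w W by apply: open_nbhs_nbhs; split.
move/nbhs_ballP => [e e0 sub]; exists e => // z h1 h2; apply: sub.
by split; rewrite -ball_normE /ball_ /= distrC.
Qed.

Section CosTurn.
Variable R : realType.
Local Notation pi := (@trigo.pi R).

(* cos_turn x = cos (2 pi x): a continuous function of period 1 taking the
   value 1 exactly at the integers; it separates points of R/Z. *)
Definition cos_turn (x : R) : R := cos (pi *+ 2 * x).

Lemma cos_turn_cont : continuous cos_turn.
Proof.
move=> x; apply: continuous_comp; last exact: continuous_cos.
by apply: cvgM; [exact: cvg_cst | exact: cvg_id].
Qed.

Lemma cos_turn_diff_cont (X : topologicalType) (f : X -> R) (c : R) :
  continuous f -> continuous (fun x => cos_turn (f x - c)).
Proof.
move=> cf x; apply: (continuous_comp (f := fun x => f x - c)).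
  exact: (cvgB (cf x) (cvg_cst c)).
exact: cos_turn_cont.
Qed.

Lemma cos_turnDn (y : R) (n : nat) : cos_turn (y + n%:R) = cos_turn y.
Proof. by rewrite /cos_turn mulrDr mulr_natr periodicn //; exact: cosD2pi. Qed.

Lemma cos_turn_int (x y : R) : x - y \is a Num.int -> cos_turn x = cos_turn y.
Proof.
move=> /intrP[k hk]; have -> : x = y + k%:~R by rewrite -hk addrC subrK.
case: k {hk} => n; first by rewrite cos_turnDn.
rewrite NegzE mulrNz.
by have := cos_turnDn (y - n.+1%:R) n.+1; rewrite subrK => <-.
Qed.

Lemma cos_turn0 : cos_turn 0 = 1.
Proof. by rewrite /cos_turn mulr0 cos0. Qed.

Lemma cos_turn_le1 (x : R) : cos_turn x <= 1.
Proof. exact: cos_le1. Qed.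

Lemma cos_turn_eq1 (x : R) : cos_turn x = 1 -> x \is a Num.int.
Proof.
move=> h; set r := x - (Num.floor x)%:~R.
have r0 : 0 <= r by rewrite subr_ge0 Num.Theory.floor_le.
have r1 : r < 1.
  by rewrite ltrBlDl; have := Num.Theory.floorD1_gt x; rewrite intrD addrC.
have hr : cos_turn r = 1.
  by rewrite -h; apply: cos_turn_int; rewrite /r addrAC subrr add0r rpredN intr_int.
(* cos (2 pi r) = 1 - 2 sin (pi r)^2 *)
have sin0 : sin (pi * r) = 0.
  move: hr; rewrite /cos_turn mulrnAl cos_mulr2n cos2sin2 => hr.
  by apply/eqP; rewrite -sqrf_eq0; apply/eqP; move: hr; rewrite mulr2n; lra.
suff r_eq0 : r = 0.
  by rewrite -[x](subrK (Num.floor x)%:~R) -/r r_eq0 add0r intr_int.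
apply/eqP; rewrite eq_le r0 andbT leNgt; apply/negP => r_gt0.
have pi0 := pi_gt0 R.
have : 0 < sin (pi * r).
  by apply: sin_gt0_pi; rewrite mulr_gt0 //= -[ltRHS]mulr1 ltr_pM2l.
by rewrite sin0 ltxx.
Qed.

End CosTurn.

Section Torus.
Variable R : realType.
Local Notation T := (torus R).

Definition torus_pi (u : R * R) : T := \pi_T u.

Lemma torus_pi_eq u v : torus_pi u = torus_pi v <-> zz_rel R u v.
Proof. by split => [/eqquotP | uv]; last exact/eqquotP. Qed.

Lemma torus_piK (z : T) : torus_pi (repr z) = z.
Proof. exact: reprK. Qed.

Lemma repr_torus_pi (u : R * R) : zz_rel R (repr (torus_pi u)) u.
Proof. by apply/torus_pi_eq; rewrite torus_piK. Qed.

Lemma torus_pi_cont : continuous torus_pi.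
Proof. exact: pi_continuous. Qed.

Lemma zz_rel_shift (u v : R * R) (x y : R) :
  zz_rel R u v -> zz_rel R (u.1 + x, u.2 + y) (v.1 + x, v.2 + y).
Proof.
by rewrite /zz_rel /= !opprD !addrA !(addrAC _ x) !subrK !(addrAC _ y) subrK.
Qed.

Lemma flowE a u t : flow R a (torus_pi u) t = torus_pi (u.1 + t, u.2 + a * t).
Proof. exact/torus_pi_eq/zz_rel_shift/repr_torus_pi. Qed.

Lemma zz_rel_subz (u : R * R) (m n : int) :
  zz_rel R (u.1 - m%:~R, u.2 - n%:~R) u.
Proof.
rewrite /zz_rel /= addrAC subrr add0r rpredN intr_int.
by rewrite addrAC subrr add0r rpredN intr_int.
Qed.

(* Points of the torus are separated by sums of cos_turn of coordinates. *)
Lemma torus_hausdorff : hausdorff_space T.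
Proof.
apply: (@sep_hausdorff R) => p q pq.
pose a := repr p.
(* f z = 2 exactly when z = p *)
pose f (z : T) := cos_turn ((repr z).1 - a.1) + cos_turn ((repr z).2 - a.2).
exists f; split.
  apply/quotient_continuous.
  have -> : f \o \pi_T = fun u : R * R => cos_turn (u.1 - a.1) + cos_turn (u.2 - a.2).
    apply: funext => u /=; have /andP[h1 h2] := repr_torus_pi u.
    by congr (_ + _); apply: cos_turn_int; rewrite opprB addrA subrK.
  have c1 := @cos_turn_diff_cont R _ fst a.1 (fun=> cvg_fst).
  have c2 := @cos_turn_diff_cont R _ snd a.2 (fun=> cvg_snd).
  by move=> u; apply: cvgD; [exact: c1 | exact: c2].
apply: contra pq => /eqP; rewrite /f /a !subrr cos_turn0 => fq.
have l1 := cos_turn_le1 ((repr q).1 - (repr p).1).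
have l2 := cos_turn_le1 ((repr q).2 - (repr p).2).
have q1 : cos_turn ((repr q).1 - (repr p).1) = 1 by lra.
have q2 : cos_turn ((repr q).2 - (repr p).2) = 1 by lra.
apply/eqP; rewrite -(torus_piK p) -(torus_piK q); apply/torus_pi_eq.
by rewrite zz_sym /zz_rel (cos_turn_eq1 q1) (cos_turn_eq1 q2).
Qed.

(* T^2 is the image of the unit square. *)
Lemma torus_compact : compact [set: T].
Proof.
have -> : [set: T] = torus_pi @` (`[0, 1]%classic `*` `[0, 1]%classic).
  apply/seteqP; split => // z _; pose u := repr z.
  exists (u.1 - (Num.floor u.1)%:~R, u.2 - (Num.floor u.2)%:~R).
    split => /=; rewrite in_itv /= subr_ge0 Num.Theory.floor_le /= lerBlDl;
    apply: ltW; have := Num.Theory.floorD1_gt u.1;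
    have := Num.Theory.floorD1_gt u.2; rewrite !intrD !(addrC _ 1) //.
  by rewrite -(torus_piK z); apply/torus_pi_eq/zz_rel_subz.
apply: continuous_compact; first exact/continuous_subspaceT/torus_pi_cont.
by apply: compact_setX; exact: segment_compact.
Qed.

End Torus.

Section OrbitSpace.
Variables (R : realType) (a : R).
Local Notation T := (torus R).
Local Notation Y := (orbit_space R a).
Local Notation proj := (Defs.proj R a).

Definition orbit_pi (u : R * R) : Y := proj (torus_pi u).

Definition orbit_rel (u v : R * R) : Prop :=
  exists t, zz_rel R (u.1 + t, u.2 + a * t) v.

Lemma proj_eq (z w : T) : proj z = proj w <-> Defs.orbit R a z = Defs.orbit R a w.
Proof.
by split => [/eqquotP/asboolP | h]; last by apply/eqquotP; apply/asboolP.
Qed.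

Lemma proj_reprK (y : Y) : proj (repr y) = y.
Proof. exact: reprK. Qed.

Lemma orbit_pi_eq u v : orbit_pi u = orbit_pi v <-> orbit_rel u v.
Proof.
have orbitE w : Defs.orbit R a (torus_pi w) =
    [set torus_pi (w.1 + t, w.2 + a * t) | t in setT].
  by apply/seteqP; split => z [t _ <-]; exists t => //; rewrite flowE.
rewrite proj_eq !orbitE; split => [orb_eq | [t uv]].
  have : [set torus_pi (v.1 + t, v.2 + a * t) | t in setT] (torus_pi v).
    by exists 0 => //; rewrite mulr0 !addr0; case: v {orb_eq}.
  by rewrite -orb_eq => -[t _ /torus_pi_eq]; exists t.
apply/seteqP; split => z [s _ <-].
  exists (s - t) => //; apply/torus_pi_eq.
  have := zz_rel_shift (s - t) (a * (s - t)) uv => /=.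
  by rewrite -!addrA -mulrDr [t + _]addrC subrK zz_sym.
exists (s + t) => //; apply/torus_pi_eq.
have := zz_rel_shift s (a * s) uv => /=.
by rewrite -!addrA mulrDr (addrC t s) (addrC (a * t)).
Qed.

Lemma proj_cont : continuous proj.
Proof. exact: pi_continuous. Qed.

Lemma orbit_pi_cont : continuous orbit_pi.
Proof.
by move=> u; apply: continuous_comp; [exact: torus_pi_cont | exact: proj_cont].
Qed.

Lemma orbit_pi_surj (y : Y) : exists u, orbit_pi u = y.
Proof. by exists (repr (repr y)); rewrite /orbit_pi torus_piK proj_reprK. Qed.

Lemma orbit_self (z : T) : Defs.orbit R a z z.
Proof.
exists 0 => //; rewrite /flow mulr0 !addr0.
by case: (repr z) (torus_piK z) => x y.
Qed.

Lemma proj_orbit (w x : T) : Defs.orbit R a w x -> proj x = proj w.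
Proof.
case=> t _ <-; rewrite /flow -[in RHS](torus_piK w).
by symmetry; apply/orbit_pi_eq; exists t; exact: zz_refl.
Qed.

Lemma psi_proj (h : {compact-open, T -> T}) :
  Delta_map R a h -> forall z, psi R a h (proj z) = proj (h z).
Proof.
move=> [_ h_orb] z; have [w hw] := h_orb z.
have orb_z : Defs.orbit R a z (repr (proj z)).
  have /proj_eq <- : proj (repr (proj z)) = proj z by rewrite proj_reprK.
  exact: orbit_self.
rewrite /psi (proj_orbit (hw _ _)); last by exists (repr (proj z)).
by rewrite (proj_orbit (hw _ _)) //; exists z => //; exact: orbit_self.
Qed.

End OrbitSpace.

Section Rational.
Variables (R : realType) (a : R) (q : rat).
Hypothesis aq : a = ratr q.
Local Notation T := (torus R).
Local Notation Y := (orbit_space R a).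
Local Notation proj := (Defs.proj R a).

Let b : R := (denq q)%:~R.
Let p : R := (numq q)%:~R.

Let b_neq0 : b != 0.
Proof. by rewrite /b intr_eq0 denq_neq0. Qed.

Let aE : a = p / b.
Proof. by rewrite aq -{1}(divq_num_den q) fmorph_div !rmorph_int. Qed.

(* phi (x, y) = b y - p x is a complete invariant of orbits modulo Z. *)
Definition orbit_invariant (u : R * R) : R := b * u.2 - p * u.1.

Lemma orbit_invariant_int u v :
  orbit_rel a u v -> orbit_invariant u - orbit_invariant v \is a Num.int.
Proof.
case=> t /andP[/intrP[m hm] /intrP[n hn]] /=.
have -> : orbit_invariant u - orbit_invariant v = (denq q * n - numq q * m)%:~R.
  by rewrite intrB !intrM -hm -hn -/b -/p /orbit_invariant aE /=; field.
exact: intr_int.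
Qed.

(* Conversely, given a Bezout relation x p + y b = 1, an integer jump k of
   phi from u to v is realised by the flow time v.1 - u.1 - k x. *)
Lemma int_orbit_invariant u v :
  orbit_invariant u - orbit_invariant v \is a Num.int -> orbit_rel a u v.
Proof.
case/intrP => k hk.
have [x [y bezout]] := Bezoutz (numq q) (denq q).
rewrite (eqP (coprime_num_den q : coprimez _ _)) in bezout.
have hy : (y%:~R : R) = (1 - x%:~R * p) / b.
  apply: (mulIf b_neq0); rewrite mulfVK //.
  have := congr1 (fun z : int => (z%:~R : R)) bezout.
  by rewrite /= intrD !intrM -/b -/p => h1; lra.
exists (v.1 - u.1 - (k * x)%:~R); apply/andP; split => /=.
  have -> : u.1 + (v.1 - u.1 - (k * x)%:~R) - v.1 = (- (k * x))%:~R.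
    by rewrite intrN; ring.
  exact: intr_int.
have -> : u.2 + a * (v.1 - u.1 - (k * x)%:~R) - v.2 = (k * y)%:~R.
  by rewrite !intrM hy aE -hk /orbit_invariant; field.
exact: intr_int.
Qed.

(* Orbits are separated by the functions cos_turn (phi - c). *)
Lemma orbit_space_hausdorff : hausdorff_space Y.
Proof.
apply: (@sep_hausdorff R) => y1 y2 y12.
pose c := orbit_invariant (repr (repr y1)).
pose F (y : Y) := cos_turn (orbit_invariant (repr (repr y)) - c).
exists F; split.
  apply/quotient_continuous; apply/quotient_continuous.
  have -> : F \o \pi_Y \o \pi_T =
            fun u : R * R => cos_turn (orbit_invariant u - c).
    apply: funext => u /=; rewrite /F; apply: cos_turn_int.
    have -> : forall A B : R, A - c - (B - c) = A - B by move=> A B; ring.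
    apply: orbit_invariant_int.
    by apply/orbit_pi_eq; rewrite /orbit_pi torus_piK proj_reprK.
  apply: cos_turn_diff_cont => u.
  by apply: cvgB; (apply: cvgM; first exact: cvg_cst);
    [exact: cvg_snd | exact: cvg_fst].
apply: contra y12 => /eqP; rewrite /F subrr cos_turn0 => /esym/cos_turn_eq1.
move/int_orbit_invariant/(orbit_pi_eq a).
by rewrite /orbit_pi !torus_piK !proj_reprK => ->.
Qed.

(* Preimages of compact sets are closed in the compact torus. *)
Lemma proj_preimage_compact (L : set Y) : compact L -> compact (proj @^-1` L).
Proof.
move=> cL; apply: (subclosed_compact _ (@torus_compact R)) => //.
move/continuous_closedP: (@proj_cont R a); apply.
exact: compact_closed orbit_space_hausdorff cL.
Qed.

(* p^-1(L) is itself a compact lift of L. *)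
Lemma comp_rational : prop_COMP R a.
Proof.
move=> L cL; exists (proj @^-1` L); split; first exact: proj_preimage_compact.
apply/seteqP; split => [_ [z Lz <-] //|y Ly].
by exists (repr y); rewrite /= proj_reprK.
Qed.

(* A subbasic neighbourhood {g | g(K) c O} of psi(h) pulls back to the
   neighbourhood {g | g(p^-1 K) c p^-1 O} of h, as p^-1 K is compact. *)
Lemma cont_rational : prop_CONT R a.
Proof.
apply: continuous_in_subspaceT => h; rewrite inE => h_Delta.
have FF : Filter (psi R a @ h) by apply: fmap_filter; exact: nbhs_filter.
apply/(compact_open_cvgP _ FF) => K O cK oO hKO.
pose C := proj @^-1` K; pose O' := proj @^-1` O.
have oO' : open O' by move/continuousP: (@proj_cont R a); apply.
have hCO : [set g : {compact-open, T -> T} | g @` C `<=` O'] h.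
  move=> _ [z Cz <-]; rewrite /O' /= -(psi_proj h_Delta).
  by apply: hKO; exists (proj z).
have : nbhs h [set g : {compact-open, T -> T} | g @` C `<=` O'].
  apply: open_nbhs_nbhs; split => //.
  exact: compact_open_open (proj_preimage_compact cK) oO'.
apply: filterS => g gCO _ [y Ky <-].
by apply: (gCO (g (repr y))); exists (repr y) => //; rewrite /C /= proj_reprK.
Qed.

End Rational.

Section Lattice.
Variables (R : realType) (a : R).

(* The subgroup Z a + Z of R: (0, x) lies on the orbit of (0, 0) exactly
   when x belongs to it. *)
Definition lattice (x : R) : Prop := exists m n : int, x = m%:~R * a + n%:~R.

Lemma latticeD x y : lattice x -> lattice y -> lattice (x + y).
Proof.
by move=> [m [n ->]] [m' [n' ->]]; exists (m + m'), (n + n'); rewrite !intrD; ring.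
Qed.

Lemma latticeN x : lattice x -> lattice (- x).
Proof. by move=> [m [n ->]]; exists (- m), (- n); rewrite !intrN; ring. Qed.

Lemma latticeMz (k : int) x : lattice x -> lattice (k%:~R * x).
Proof. by move=> [m [n ->]]; exists (k * m), (k * n); rewrite !intrM; ring. Qed.

Lemma lattice1 : lattice 1.
Proof. by exists 0, 1; rewrite mul0r add0r. Qed.

Lemma lattice_a : lattice a.
Proof. by exists 1, 0; rewrite mul1r addr0. Qed.

Definition lattice_enum (j : nat) : R :=
  if unpickle j is Some mn then mn.1%:~R * a + mn.2%:~R else 0.

Lemma lattice_enumP : lattice `<=` range lattice_enum.
Proof.
by move=> _ [m [n ->]]; exists (pickle (m, n)) => //; rewrite /lattice_enum pickleK.
Qed.

Let pos_lattice := [set g | lattice g /\ 0 < g].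
Let s := inf pos_lattice.

Let has_inf_pos : has_inf pos_lattice.
Proof. by split; [exists 1; split; [exact: lattice1 | exact: ltr01]|
                  exists 0 => g [] _ /ltW]. Qed.

(* If the infimum is positive it is attained: otherwise two lattice points
   in (s, 2s) would have a positive difference smaller than s. *)
Lemma inf_pos_lattice_mem : 0 < s -> pos_lattice s.
Proof.
move=> s0; apply: contrapT => s_notin.
have [g1 Sg1 g1_lt] := inf_adherent s0 has_inf_pos.
have sg1 : s < g1 := inf_lb_strict has_inf_pos.2 s_notin Sg1.
have [g2 Sg2 g2_lt] : exists2 g2, pos_lattice g2 & g2 < s + (g1 - s).
  by apply: inf_adherent => //; rewrite subr_gt0.
have sg2 : s < g2 := inf_lb_strict has_inf_pos.2 s_notin Sg2.
rewrite addrC subrK in g2_lt.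
have Sd : pos_lattice (g1 - g2).
  by split; [apply: latticeD (latticeN _); [exact: Sg1.1 | exact: Sg2.1]
            | rewrite subr_gt0].
have := ge_inf has_inf_pos.2 Sd; rewrite -/s; lra.
Qed.

Lemma lattice_multiple_min : pos_lattice s ->
  forall g, lattice g -> exists k : int, g = k%:~R * s.
Proof.
move=> [Ls s0] g Lg; exists (Num.floor (g / s)).
pose r := g - (Num.floor (g / s))%:~R * s.
have Lr : lattice r by apply: latticeD Lg (latticeN (latticeMz _ Ls)).
have r0 : 0 <= r by rewrite subr_ge0 -ler_pdivlMr // Num.Theory.floor_le.
have rs : r < s.
  rewrite ltrBlDl -[X in _ + X]mul1r -mulrDl -ltr_pdivrMr //.
  by have := Num.Theory.floorD1_gt (g / s); rewrite intrD.
suff r_eq0 : r = 0 by apply/eqP; rewrite -subr_eq0 -/r r_eq0.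
apply/eqP; rewrite eq_le r0 andbT leNgt; apply/negP => r_gt0.
have := ge_inf has_inf_pos.2 (conj Lr r_gt0); rewrite -/s; lra.
Qed.

Hypothesis irr : ~ exists q : rat, a = ratr q.

(* For irrational a the lattice has arbitrarily small positive elements,
   since otherwise 1 and a would be integer multiples of its minimum. *)
Lemma lattice_small eps : 0 < eps -> exists g, lattice g /\ 0 < g < eps.
Proof.
move=> eps0; apply: contrapT => no_small.
have eps_s : eps <= s.
  apply: lb_le_inf; first by exists 1; split; [exact: lattice1 | exact: ltr01].
  move=> g [Lg g0]; rewrite leNgt; apply/negP => g_lt.
  by apply: no_small; exists g; rewrite g0 g_lt.
have mult := lattice_multiple_min (inf_pos_lattice_mem (lt_le_trans eps0 eps_s)).
have [k1 e1] := mult 1 lattice1; have [k2 e2] := mult a lattice_a.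
have k10 : (k1%:~R : R) != 0.
  by apply: contra_eq_neq e1 => ->; rewrite mul0r oner_neq0.
apply: irr; exists (k2%:Q / k1%:Q); rewrite fmorph_div !rmorph_int e2.
have -> : s = 1 / k1%:~R by apply: (mulfI k10); rewrite -e1 mulrA mulr1 divff.
by rewrite mul1r.
Qed.

Lemma lattice_approx c eps : 0 < eps -> exists g, lattice g /\ `|g - c| < eps.
Proof.
move=> eps0; have [g [Lg /andP[g0 g_lt]]] := lattice_small eps0.
exists ((Num.floor (c / g))%:~R * g); split; first exact: latticeMz.
have h1 := Num.Theory.floor_le (c / g).
have h2 := Num.Theory.floorD1_gt (c / g); rewrite intrD in h2.
rewrite ler_pdivlMr // in h1; rewrite ltr_pdivrMr // mulrDl mul1r in h2.
rewrite ltr_distlC; apply/andP; split; lra.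
Qed.

Lemma lattice_dense : dense lattice.
Proof.
move=> O [x Ox] oO.
have : nbhs x O by apply: open_nbhs_nbhs; split.
move/nbhs_ballP => [e e0 sub].
have [g [Lg gx]] := lattice_approx x e0.
by exists g; split => //; apply: sub; rewrite -ball_normE /ball_ /= distrC.
Qed.

End Lattice.

Section Irrational.
Variables (R : realType) (a : R).
Hypothesis irr : ~ exists q : rat, a = ratr q.
Local Notation T := (torus R).
Local Notation Y := (orbit_space R a).
Local Notation proj := (Defs.proj R a).
Local Notation orbit_pi := (orbit_pi a).
Local Notation torus_pi := (@torus_pi R).

(* Every orbit is dense, so every nonempty open set of Y is all of Y:
   an open set around orbit_pi w contains the points (w.1, w.2 + d) for small
   d, and the orbit of any u passes through one of them. *)
Lemma orbit_space_indiscrete (V : set Y) : open V -> V = set0 \/ V = setT.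
Proof.
move=> oV; have [[y Vy]|V0] := pselect (V !=set0); last first.
  by left; apply/seteqP; split => // z Vz; apply: V0; exists z.
right; apply/seteqP; split => // y' _.
have oW : open (orbit_pi @^-1` V).
  by move/continuousP: (@orbit_pi_cont R a); apply.
have [w wy] := orbit_pi_surj y; have [u <-] := orbit_pi_surj y'.
have [e e0 sub] : exists2 e, 0 < e & forall z : R * R,
    `|z.1 - w.1| < e -> `|z.2 - w.2| < e -> V (orbit_pi z).
  by apply: open_squareP oW _; rewrite /= wy.
pose c := w.2 - u.2 - a * (w.1 - u.1).
have [g [[m [n gE]] gc]] := lattice_approx irr c e0.
have -> : orbit_pi u = orbit_pi (w.1, u.2 + a * (w.1 - u.1) + g).
  apply/orbit_pi_eq; exists (w.1 - u.1 + m%:~R); apply/andP; split => /=.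
    by have -> : u.1 + (w.1 - u.1 + m%:~R) - w.1 = m%:~R by ring; exact: intr_int.
  rewrite gE (_ : _ - _ = (- n)%:~R) ?intr_int //; rewrite intrN; ring.
apply: sub => /=; first by rewrite subrr normr0.
by have -> : u.2 + a * (w.1 - u.1) + g - w.2 = g - c by rewrite /c; ring.
Qed.

(* A subbasic set {g | g(K) c O} is empty or everything, as O is. *)
Lemma cont_irrational : prop_CONT R a.
Proof.
apply: continuous_subspaceT => h.
have FF : Filter (psi R a @ h) by apply: fmap_filter; exact: nbhs_filter.
apply/(compact_open_cvgP _ FF) => K O cK oO hKO.
case: (orbit_space_indiscrete oO) => O_eq; last first.
  by apply: filterS (@filterT _ _ _) => g _ y _; rewrite O_eq.
apply: filterS (@filterT _ _ _) => g _ y [k Kk _].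
have /hKO : (psi R a h @` K) (psi R a h k) by exists k.
by rewrite O_eq.
Qed.

(* Orbits through the line x = 0 are indexed by R / (Z a + Z), via the
   coordinate y - a x. *)
Definition slope_coord (u : R * R) : R := u.2 - a * u.1.

Lemma slope_coord_cont : continuous slope_coord.
Proof.
move=> u; apply: cvgB; first exact: cvg_snd.
by apply: cvgM; [exact: cvg_cst | exact: cvg_fst].
Qed.

Lemma lattice_orbit0 u : lattice a (slope_coord u) -> orbit_pi u = orbit_pi (0, 0).
Proof.
move=> [m [n hmn]]; apply/orbit_pi_eq; exists (- u.1 - m%:~R).
apply/andP; split => /=; rewrite subr0.
  by have -> : u.1 + (- u.1 - m%:~R) = (- m)%:~R by rewrite intrN; ring.
have -> : u.2 + a * (- u.1 - m%:~R) = n%:~R.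
  by move: hmn; rewrite /slope_coord; lra.
exact: intr_int.
Qed.

Lemma orbit0_lattice c : orbit_pi (0, c) = orbit_pi (0, 0) -> lattice a c.
Proof.
move=> /orbit_pi_eq [t /andP[/intrP[m hm] /intrP[n hn]]].
rewrite /= !add0r !subr0 in hm hn.
by exists (- m), n; rewrite intrN -hm -hn; ring.
Qed.

Definition square (n : nat) : set (R * R) :=
  `[- n%:R, n%:R]%classic `*` `[- n%:R, n%:R]%classic.

Lemma square_exhaust (v : R * R) : exists n, square n v.
Proof.
exists (Num.truncn (`|v.1| + `|v.2|)).+1.
have hb := real_truncnS_gt (num_real (`|v.1| + `|v.2|)).
have n1 := normr_ge0 v.1; have n2 := normr_ge0 v.2.
by split; rewrite /= in_itv /= -ler_norml; apply: ltW; lra.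
Qed.

(* The
   y-intercepts of the lines of slope a through the points over K in the
   square [-n, n]^2 form sets intercepts n that miss Z a + Z and cover its
   complement. *)
Section NoCompactLift.
Variable K : set T.
Hypothesis K_onto : proj @` K = ~` [set orbit_pi (0, 0)].

Definition intercepts (n : nat) : set R :=
  slope_coord @` (square n `&` torus_pi @^-1` K).

Lemma intercepts_closed : compact K -> forall n, closed (intercepts n).
Proof.
move=> cK n; apply: compact_closed; first exact: Rhausdorff.
apply: continuous_compact; first exact/continuous_subspaceT/slope_coord_cont.
apply: compact_closedI; first by apply: compact_setX; exact: segment_compact.
move/continuous_closedP: (@torus_pi_cont R); apply.
exact: compact_closed (@torus_hausdorff R) cK.
Qed.

Lemma intercepts_lattice n : intercepts n `&` lattice a = set0.
Proof.
apply/seteqP; split => // _ [[u [_ Ku] <-] /lattice_orbit0 u0].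
have : (~` [set orbit_pi (0, 0)]) (orbit_pi u).
  by rewrite -K_onto; exists (torus_pi u).
by apply.
Qed.

(* For c outside the lattice, the orbit of (0, c) meets K at some [u]; the
   orbit relation u + t (1, a) = (m, c + n) gives c as the intercept of
   u - (m, n). *)
Lemma intercepts_cover c : ~ lattice a c -> exists n, intercepts n c.
Proof.
move=> c_notin.
have : (proj @` K) (orbit_pi (0, c)) by rewrite K_onto => /orbit0_lattice.
case=> k Kk; rewrite -(torus_piK k) => /orbit_pi_eq.
case=> t /andP[/intrP[m hm] /intrP[n hn]].
rewrite /= subr0 in hm; rewrite /= in hn.
pose v := ((repr k).1 - m%:~R, (repr k).2 - n%:~R).
have Kv : K (torus_pi v).
  rewrite (_ : torus_pi v = k) // -[RHS]torus_piK; apply/torus_pi_eq.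
  exact: zz_rel_subz.
have [N vN] := square_exhaust v.
exists N, v => //; rewrite /slope_coord /v /= -hm -hn; ring.
Qed.

End NoCompactLift.

(* L = Y \ {p(0)} is compact since Y is indiscrete; a compact lift K would
   contradict Baire's theorem through the intercept sets. *)
Lemma not_comp_irrational : ~ prop_COMP R a.
Proof.
move=> comp.
pose L := ~` [set orbit_pi (0, 0)].
have cL : compact L by apply: indiscrete_compact; exact: orbit_space_indiscrete.
have [K [cK KL]] := comp L cL.
have [c [c_notin c_nF]] := baire_escape (lattice_dense irr) (@lattice_enumP R a)
  (intercepts_closed cK) (intercepts_lattice KL).
by have [n] := intercepts_cover KL c_notin; apply: c_nF.
Qed.

End Irrational.

Unset Implicit Arguments.

Theorem mainTheorem12 (R : realType) (alpha : R) :
  prop_CONT R alpha /\ (prop_COMP R alpha <-> exists q : rat, alpha = ratr q).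
Proof.
have [[q aq]|irr] := pselect (exists q : rat, alpha = ratr q).
  split; first exact: cont_rational aq.
  by split => _; [exists q | exact: comp_rational aq].
split; first exact: cont_irrational irr.
by split => [comp|//]; case: (not_comp_irrational irr comp).
Qed.
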